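(* Let $\mathcal{Y}=\{1,\dots,m\}$ be a finite set of classes and $\Delta(\mathcal{Y})$ the set of probability vectors on $\mathcal{Y}$. Let $u:\mathcal{Y}\times\mathcal{Y}\to\mathbb{R}_+$ be nonnegative and nondegenerate (for every $y$ there is $a$ with $u(a,y)>0$), and define $p^u:\Delta(\mathcal{Y})\to\Delta(\mathcal{Y})$ by $p^u_y(q)=\bar u(y,q)/\sum_{y'\in\mathcal{Y}}\bar u(y',q)$, where $\bar u(y,q)=\sum_{y'}u(y,y')q_{y'}$. Then the level sets of $p^u$ are convex: for any $q,q'\in\Delta(\mathcal{Y})$ and $\alpha\in[0,1]$, if $p^u(q)=p^u(q')=p$ then $p^u(\alpha q+(1-\alpha)q')=p$. *)

From mathcomp Require Import all_boot all_order all_algebra.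
Set Implicit Arguments. Unset Strict Implicit. Unset Printing Implicit Defensive.
Import Order.TTheory GRing.Theory Num.Theory.
Local Open Scope ring_scope.

Definition prob_vec (R : realFieldType) (m : nat) (q : 'I_m -> R) : Prop :=
  (forall y, 0 <= q y) /\ \sum_(y < m) q y = 1.

Definition ubar (R : realFieldType) (m : nat) (u : 'I_m -> 'I_m -> R)
  (y : 'I_m) (q : 'I_m -> R) : R := \sum_(y' < m) u y y' * q y'.

Definition pu (R : realFieldType) (m : nat) (u : 'I_m -> 'I_m -> R)
  (q : 'I_m -> R) : 'I_m -> R :=
  fun y => ubar u y q / \sum_(y' < m) ubar u y' q.

From mathcomp Require Import all_boot all_order all_algebra.
Set Implicit Arguments. Unset Strict Implicit. Unset Printing Implicit Defensive.
Import Order.TTheory GRing.Theory Num.Theory.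
Local Open Scope ring_scope.

(* On the simplex the normalizer S(q) = sum_y' ubar(y', q) is positive, since u
   is nonnegative and nondegenerate, so p^u(q) = p is equivalent to the
   equations ubar(y, q) = p_y * S(q).  Both sides are linear in q, hence these
   equations survive convex combinations. *)

Lemma sumr_gt0_of_gt0 (R : numDomainType) (I : finType) (F : I -> R) (i0 : I) :
  (forall i, 0 <= F i) -> 0 < F i0 -> 0 < \sum_i F i.
Proof.
move=> F_ge0 Fi0_gt0; rewrite (bigD1 i0) //=.
by apply: ltr_wpDr => //; apply: sumr_ge0.
Qed.

Section ProbVec.
Variables (R : realFieldType) (m : nat).
Implicit Types (q : 'I_m -> R) (alpha : R).

Lemma prob_vec_exists_gt0 q : prob_vec q -> exists y, 0 < q y.
Proof.
case=> q_ge0 q_sum1.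
have /(psumr_neq0P (fun y _ => q_ge0 y))[y /andP[_ qy_gt0]] : \sum_(y < m) q y <> 0.
  by rewrite q_sum1; apply/eqP; rewrite oner_neq0.
by exists y.
Qed.

Lemma prob_vec_convex q q' alpha :
  prob_vec q -> prob_vec q' -> 0 <= alpha -> alpha <= 1 ->
  prob_vec (fun z => alpha * q z + (1 - alpha) * q' z).
Proof.
move=> [q_ge0 q_sum1] [q'_ge0 q'_sum1] alpha_ge0 alpha_le1; split.
  by move=> z; rewrite addr_ge0 // mulr_ge0 // subr_ge0.
by rewrite big_split /= -!mulr_sumr q_sum1 q'_sum1 !mulr1 subrKC.
Qed.

End ProbVec.

Section LevelSets.
Variables (R : realFieldType) (m : nat) (u : 'I_m -> 'I_m -> R).
Implicit Types (q : 'I_m -> R) (c : R).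

Lemma ubar_lincomb (a b : R) q q' y :
  ubar u y (fun z => a * q z + b * q' z) = a * ubar u y q + b * ubar u y q'.
Proof.
rewrite /ubar !mulr_sumr -big_split /=; apply: eq_bigr => z _.
by rewrite mulrDr; congr (_ + _); apply: mulrCA.
Qed.

Lemma sum_ubar_lincomb (a b : R) q q' :
  \sum_(y < m) ubar u y (fun z => a * q z + b * q' z)
  = a * \sum_(y < m) ubar u y q + b * \sum_(y < m) ubar u y q'.
Proof.
by rewrite (eq_bigr _ (fun y _ => ubar_lincomb a b q q' y)) big_split -!mulr_sumr.
Qed.

Hypothesis u_ge0 : forall a y, 0 <= u a y.
Hypothesis u_nondeg : forall y, exists a, 0 < u a y.

Lemma sum_ubar_gt0 q : prob_vec q -> 0 < \sum_(y < m) ubar u y q.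
Proof.
move=> q_prob; have [z qz_gt0] := prob_vec_exists_gt0 q_prob.
have [a uaz_gt0] := u_nondeg z; have [q_ge0 _] := q_prob.
have ubar_ge0 y : 0 <= ubar u y q by apply: sumr_ge0 => y' _; apply: mulr_ge0.
apply: (sumr_gt0_of_gt0 (i0 := a)) => //.
by apply: (sumr_gt0_of_gt0 (i0 := z)) => [y'|]; rewrite ?mulr_ge0 ?mulr_gt0.
Qed.

Lemma pu_eq_mul_sum q y c :
  prob_vec q -> (pu u q y = c) <-> (ubar u y q = c * \sum_(y' < m) ubar u y' q).
Proof.
move=> /sum_ubar_gt0 /gt_eqF /negbT S_neq0; rewrite /pu.
by split=> [<-|->]; rewrite ?mulfVK ?mulfK.
Qed.

End LevelSets.

Theorem lemma1 (R : realFieldType) (m : nat) (u : 'I_m -> 'I_m -> R)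
  (u_ge0 : forall a y, 0 <= u a y)
  (u_nondeg : forall y, exists a, 0 < u a y)
  (q q' p : 'I_m -> R) (alpha : R)
  (hq : prob_vec q) (hq' : prob_vec q')
  (halpha0 : 0 <= alpha) (halpha1 : alpha <= 1)
  (hpq : forall y, pu u q y = p y) (hpq' : forall y, pu u q' y = p y) :
  forall y, pu u (fun z => alpha * q z + (1 - alpha) * q' z) y = p y.
Proof.
move=> y; have mix_prob := prob_vec_convex hq hq' halpha0 halpha1.
move: (hpq y) (hpq' y).
move=> /(pu_eq_mul_sum u_ge0 u_nondeg _ _ hq) ubar_q.
move=> /(pu_eq_mul_sum u_ge0 u_nondeg _ _ hq') ubar_q'.
apply/(pu_eq_mul_sum u_ge0 u_nondeg _ _ mix_prob).
rewrite ubar_lincomb sum_ubar_lincomb ubar_q ubar_q' mulrDr.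
by congr (_ + _); apply: mulrCA.
Qed.
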